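(* Let $f(a,b,c,d,e,x,y)$ be analytic in a neighbourhood of the origin of $\mathbb{C}^7$, and for fixed $(a,b,c,d,e)$ write $F(X,Y)=f(a,b,c,d,e,X,Y)$. The following are equivalent. (i) In some neighbourhood of the origin, $f$ satisfies $$x\Big\{F(x,y)-F(x,yq)-(d+e)q^{-1}\big[F(x,yq)-F(x,yq^2)\big]+de\,q^{-2}\big[F(x,yq^2)-F(x,yq^3)\big]\Big\}$$ $$=y\Big\{\big[F(x,y)-F(xq,y)\big]-(a+b+c)\big[F(x,yq)-F(xq,yq)\big]+(ab+ac+bc)\big[F(x,yq^2)-F(xq,yq^2)\big]-abc\big[F(x,yq^3)-F(xq,yq^3)\big]\Big\}.$$ (ii) $f$ can be expanded in terms of the polynomials $\phi_n^{(a,b,c;d,e)}(x,y|q)$. That is, there exist functions $\mu_n=\mu_n(a,b,c,d,e)$, $n\ge 0$, defined near the origin of $\mathbb{C}^5$, such that $$f(a,b,c,d,e,x,y)=\sum_{n\ge0}\mu_n\,\phi_n^{(a,b,c;d,e)}(x,y|q).$$ This identity is meant as an identity of power series in $(x,y)$: for all $j,k\ge0$, the coefficient of $x^jy^k$ in the Taylor expansion of $f$ in $(x,y)$ equals $\mu_{j+k}$ times the coefficient of $x^jy^k$ in $\phi_{j+k}^{(a,b,c;d,e)}(x,y|q)$. Moreover, in this case $\sum_n\mu_n x^n=f(a,b,c,d,e,x,0)$.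
   Context: Throughout, $0<q<1$. For $\alpha\in\mathbb{C}$, $(\alpha;q)_0=1$, $(\alpha;q)_n=\prod_{j=0}^{n-1}(1-\alpha q^j)$ and $(\alpha;q)_\infty=\prod_{j\ge0}(1-\alpha q^j)$. Also $(\alpha_1,\dots,\alpha_r;q)_n=\prod_i(\alpha_i;q)_n$. The $q$-binomial coefficient is $\begin{bmatrix}n\\k\end{bmatrix}=\frac{(q;q)_n}{(q;q)_k(q;q)_{n-k}}$. The generalized Al-Salam–Carlitz polynomials are $$\phi_n^{(a,b,c;d,e)}(x,y|q)=\sum_{k=0}^n\begin{bmatrix}n\\k\end{bmatrix}\frac{(a,b,c;q)_k}{(d,e;q)_k}x^{n-k}y^k,$$ defined whenever $d,e\notin\{q^{-m}:m\ge0\}$ (in particular near $d=e=0$). *)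

From Stdlib Require Import Reals.
From Coquelicot Require Import Coquelicot.
Set Implicit Arguments.

Open Scope C_scope.

Definition psum5 {G : AbelianMonoid}
  (g : nat -> nat -> nat -> nat -> nat -> G) (N : nat) : G :=
  sum_n (fun i1 => sum_n (fun i2 => sum_n (fun i3 => sum_n (fun i4 =>
    sum_n (fun i5 => g i1 i2 i3 i4 i5) N) N) N) N) N.

Definition psum7 {G : AbelianMonoid}
  (g : nat -> nat -> nat -> nat -> nat -> nat -> nat -> G) (N : nat) : G :=
  sum_n (fun i1 => sum_n (fun i2 => sum_n (fun i3 => sum_n (fun i4 =>
    sum_n (fun i5 => sum_n (fun i6 => sum_n (fun i7 =>
      g i1 i2 i3 i4 i5 i6 i7) N) N) N) N) N) N) N.

Definition coef7 := nat -> nat -> nat -> nat -> nat -> nat -> nat -> C.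

(** A function f is
    analytic in a neighbourhood of the origin of C^7 iff
    [exists cf r, analytic7_rep cf r f]. *)
Definition analytic7_rep (cf : coef7) (r : R)
  (f : C -> C -> C -> C -> C -> C -> C -> C) : Prop :=
  (0 < r)%R /\
  (exists M : R, forall N : nat,
     (psum7 (fun i1 i2 i3 i4 i5 i6 i7 =>
        Cmod (cf i1 i2 i3 i4 i5 i6 i7) * r ^ (i1 + i2 + i3 + i4 + i5 + i6 + i7))%R N
      <= M)%R) /\
  (forall z1 z2 z3 z4 z5 z6 z7 : C,
     (Cmod z1 < r)%R -> (Cmod z2 < r)%R -> (Cmod z3 < r)%R -> (Cmod z4 < r)%R ->
     (Cmod z5 < r)%R -> (Cmod z6 < r)%R -> (Cmod z7 < r)%R ->
     filterlim
       (psum7 (fun i1 i2 i3 i4 i5 i6 i7 =>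
          cf i1 i2 i3 i4 i5 i6 i7 * pow_n z1 i1 * pow_n z2 i2 * pow_n z3 i3
          * pow_n z4 i4 * pow_n z5 i5 * pow_n z6 i6 * pow_n z7 i7))
       eventually (locally (f z1 z2 z3 z4 z5 z6 z7))).

(** [taylor_xy_is cf a b c d e j k v]: the coefficient of x^j y^k in the Taylor
    expansion in (x,y) of f(a,b,c,d,e,x,y) (f represented by cf, variables
    ordered a,b,c,d,e,x,y) equals v, i.e. the (absolutely convergent) series
    sum_{i1..i5} cf i1 .. i5 j k a^i1 b^i2 c^i3 d^i4 e^i5 sums to v. *)
Definition taylor_xy_is (cf : coef7) (a b c d e : C) (j k : nat) (v : C) : Prop :=
  filterlim
    (psum5 (fun i1 i2 i3 i4 i5 =>
       cf i1 i2 i3 i4 i5 j k * pow_n a i1 * pow_n b i2 * pow_n c i3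
       * pow_n d i4 * pow_n e i5))
    eventually (locally v).

Fixpoint qpoch (q : R) (alpha : C) (n : nat) : C :=
  match n with
  | O => 1
  | S m => qpoch q alpha m * (1 - alpha * RtoC (q ^ m))
  end.

Definition qbinom (q : R) (n k : nat) : C :=
  qpoch q (RtoC q) n / (qpoch q (RtoC q) k * qpoch q (RtoC q) (n - k)).

Definition phi_coef (q : R) (a b c d e : C) (n k : nat) : C :=
  qbinom q n k * (qpoch q a k * qpoch q b k * qpoch q c k)
  / (qpoch q d k * qpoch q e k).

Definition phi (q : R) (a b c d e : C) (n : nat) (x y : C) : C :=
  sum_n (fun k => if (k <=? n)%nat
                  then phi_coef q a b c d e n k * pow_n x (n - k) * pow_n y k
                  else RtoC 0) n.

Definition qeq (q : R) (f : C -> C -> C -> C -> C -> C -> C -> C)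
  (a b c d e x y : C) : Prop :=
  let F := f a b c d e in
  let Q := RtoC q in
  x * (F x y - F x (y * Q)
       - (d + e) / Q * (F x (y * Q) - F x (y * Q * Q))
       + d * e / (Q * Q) * (F x (y * Q * Q) - F x (y * Q * Q * Q)))
  = y * ((F x y - F (x * Q) y)
         - (a + b + c) * (F x (y * Q) - F (x * Q) (y * Q))
         + (a * b + a * c + b * c) * (F x (y * Q * Q) - F (x * Q) (y * Q * Q))
         - a * b * c * (F x (y * Q * Q * Q) - F (x * Q) (y * Q * Q * Q))).

Definition expandable (q : R) (cf : coef7)
  (mu : C -> C -> C -> C -> C -> nat -> C) : Prop :=
  exists rho : R, (0 < rho)%R /\
    forall a b c d e : C,
      (Cmod a < rho)%R -> (Cmod b < rho)%R -> (Cmod c < rho)%R ->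
      (Cmod d < rho)%R -> (Cmod e < rho)%R ->
      forall j k : nat,
        taylor_xy_is cf a b c d e j k
          (mu a b c d e (j + k)%nat * phi_coef q a b c d e (j + k) k).

(** Fix [(a,b,c,d,e)]; let [A j k] ([Acoef]) be the coefficient of [x^j y^k]
    in [F(x,y) = f(a,b,c,d,e,x,y)] and [P_n] ([hpart]) its homogeneous part
    of degree [n].  Sections, in order:
    - finite sums, box sums of multi-indexed families, limits in [C];
    - the Taylor coefficients exist, and [F = sum_n P_n] ([regrouping]);
    - the identity theorem for power series in one variable;
    - writing (i) as [qop F = 0]: [qop] sends [x^j y^k] to
      [x^j y^k (x ell_k - y rho_(j,k))], so [qop P_n] is homogeneous of degree
      [n+1], and it vanishes iff the [A(n-k,k)] satisfy a two-term recurrence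
      ([coef_rec]) -- by telescoping, resp. the identity theorem;
    - as [ell_(k+1) <> 0], the recurrence holds iff [A(n-k,k) = A(n,0) phi_coef n k];
    - (i) -> (ii) with [mu_n = A(n,0)], since [qop F = 0] kills each [qop P_n]
      by homogeneity; (ii) -> (i) since every [qop P_n] vanishes; and at [y = 0]
      the regrouping leaves [sum_n mu_n x^n]. *)

From Stdlib Require Import Reals Lra Lia Classical ClassicalEpsilon.
From Coquelicot Require Import Coquelicot.
Set Implicit Arguments.

Open Scope C_scope.

(** [zero] and [plus] of Coquelicot's structure on [C], unfolded for [ring]. *)
Lemma zeroC : @zero C_AbelianMonoid = RtoC 0.
Proof. reflexivity. Qed.

Lemma plusC (u v : C) : @plus C_AbelianMonoid u v = u + v.
Proof. reflexivity. Qed.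

(** Comparing the difference with [0] makes [ring] see an equation at [C] even
    when a side is a bare [sum_n] or [pow_n]. *)
Lemma Cdiff_eq (u v : C) : u - v = RtoC 0 -> u = v.
Proof. intros H. rewrite <- (Cplus_0_l v), <- H. ring. Qed.

(** [ring] needs the equation typed at [R] (resp. [C]), not at the carrier of a
    Coquelicot structure as produced by [sum_n] or [pow_n]. *)
Ltac ring_at T := match goal with |- ?a = ?b => change (@eq T a b) end; ring.
Ltac Cring := apply Cdiff_eq; rewrite ?zeroC, ?plusC; ring.

Lemma sum_n_zero {G : AbelianMonoid} (n : nat) : sum_n (fun _ => @zero G) n = zero.
Proof. apply sum_n_m_const_zero. Qed.

Lemma sum_n_vanishing_tail {G : AbelianMonoid} (u : nat -> G) N N' :
  (N <= N')%nat -> (forall j, (N < j)%nat -> u j = zero) -> sum_n u N' = sum_n u N.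
Proof.
  intros H Hz. induction H as [|N' HN IH]; [reflexivity|].
  rewrite sum_Sn, IH, Hz by lia. apply plus_zero_r.
Qed.

Lemma sum_n_if_le {G : AbelianMonoid} (u : nat -> G) N0 N1 :
  (N0 <= N1)%nat -> sum_n (fun i => if Nat.leb i N0 then u i else zero) N1 = sum_n u N0.
Proof.
  intros H. rewrite (sum_n_vanishing_tail _ H).
  - apply sum_n_ext_loc. intros n Hn. now rewrite (proj2 (Nat.leb_le n N0) Hn).
  - intros j Hj. destruct (Nat.leb_spec j N0); [lia | reflexivity].
Qed.

Lemma sum_n_if_eq {G : AbelianMonoid} (u : nat -> G) m n :
  (m <= n)%nat -> sum_n (fun i => if Nat.eqb i m then u i else zero) n = u m.
Proof.
  intros H. rewrite (sum_n_vanishing_tail _ H).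
  - destruct m as [|m]; [now rewrite sum_O|].
    rewrite sum_Sn, Nat.eqb_refl, (sum_n_ext_loc _ (fun _ => zero)).
    + rewrite sum_n_zero. apply plus_zero_l.
    + intros k Hk. destruct (Nat.eqb_spec k (S m)); [lia | reflexivity].
  - intros j Hj. destruct (Nat.eqb_spec j m); [lia | reflexivity].
Qed.

Lemma sum_n_shift {G : AbelianMonoid} (u : nat -> G) m :
  sum_n u (S m) = plus (u O) (sum_n (fun k => u (S k)) m).
Proof.
  induction m as [|m IH]; [now rewrite sum_Sn, !sum_O|].
  rewrite sum_Sn, IH, sum_Sn. symmetry; apply plus_assoc.
Qed.

Lemma sumC_Sn (u : nat -> C) n : sum_n u (S n) = sum_n u n + u (S n).
Proof. exact (sum_Sn u n). Qed.

Lemma sumR_Sn (u : nat -> R) n : sum_n u (S n) = (sum_n u n + u (S n))%R.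
Proof. exact (sum_Sn u n). Qed.

Lemma Cminus_0_r (z : C) : z - RtoC 0 = z.
Proof. ring. Qed.

Lemma sumC_minus (f g : nat -> C) N : sum_n (fun i => f i - g i) N = sum_n f N - sum_n g N.
Proof. induction N; [now rewrite !sum_O | rewrite !sumC_Sn, IHN; Cring]. Qed.

Lemma sumC_plus (f g : nat -> C) N : sum_n (fun i => f i + g i) N = sum_n f N + sum_n g N.
Proof. exact (@sum_n_plus C_AbelianMonoid f g N). Qed.

Lemma sumC_scal (c : C) (f : nat -> C) N : sum_n (fun i => c * f i) N = c * sum_n f N.
Proof. exact (@sum_n_mult_l C_Ring c f N). Qed.

Lemma sumR_minus (f g : nat -> R) N :
  sum_n (fun i => f i - g i)%R N = (sum_n f N - sum_n g N)%R.
Proof. induction N; [now rewrite !sum_O | rewrite !sumR_Sn, IHN; ring_at R]. Qed.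

Lemma Cmod_sum_le (f : nat -> C) (g : nat -> R) N :
  (forall i, Cmod (f i) <= g i)%R -> (Cmod (sum_n f N) <= sum_n g N)%R.
Proof.
  intros H. eapply Rle_trans; [exact (@norm_sum_n_m _ C_NormedModule f 0 N)|].
  now apply sum_n_m_le.
Qed.

(** * Box sums of multi-indexed families

    [fam k T] is the type of families [nat^k -> T]; [box_sum k g N] sums [g]
    over the box [{0..N}^k].  [box_sum 7] and [box_sum 5] are convertible to
    [psum7] and [psum5] of the statement. *)

Fixpoint fam (k : nat) (T : Type) : Type :=
  match k with O => T | S k => nat -> fam k T end.

Fixpoint box_sum {G : AbelianMonoid} (k : nat) : fam k G -> nat -> G :=
  match k return fam k G -> nat -> G with
  | O => fun g _ => g
  | S k => fun g N => sum_n (fun i => box_sum k (g i) N) N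
  end.

Fixpoint fam_const {T} (k : nat) (z : T) : fam k T :=
  match k return fam k T with O => z | S k => fun _ => fam_const k z end.

Fixpoint fam_map {A B} (k : nat) (op : A -> B) : fam k A -> fam k B :=
  match k return fam k A -> fam k B with
  | O => fun g => op g
  | S k => fun g i => fam_map k op (g i)
  end.

Fixpoint fam_rel {A B} (k : nat) (Rel : A -> B -> Prop) : fam k A -> fam k B -> Prop :=
  match k return fam k A -> fam k B -> Prop with
  | O => fun g h => Rel g h
  | S k => fun g h => forall i, fam_rel k Rel (g i) (h i)
  end.

Fixpoint fam_trunc {T} (k : nat) (z : T) (N0 : nat) : fam k T -> fam k T :=
  match k return fam k T -> fam k T with
  | O => fun g => g
  | S k => fun g i => if Nat.leb i N0 then fam_trunc k z N0 (g i) else fam_const k z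
  end.

Fixpoint fam_sum {G : AbelianMonoid} (k : nat) : (nat -> fam k G) -> nat -> fam k G :=
  match k return (nat -> fam k G) -> nat -> fam k G with
  | O => fun g M => sum_n g M
  | S k => fun g M i => fam_sum k (fun j => g j i) M
  end.

Lemma fam_rel_refl {A} k (Rel : A -> A -> Prop) g : (forall u, Rel u u) -> fam_rel k Rel g g.
Proof. induction k; simpl; auto. Qed.

Lemma box_sum_rel {G H : AbelianMonoid} (Rel : G -> H -> Prop)
  (Hs : forall (f : nat -> G) (g : nat -> H) N,
          (forall i, Rel (f i) (g i)) -> Rel (sum_n f N) (sum_n g N))
  k (g : fam k G) (h : fam k H) N : fam_rel k Rel g h -> Rel (box_sum k g N) (box_sum k h N).
Proof. induction k; simpl; auto. Qed.

Lemma box_sum_map {G H : AbelianMonoid} (op : G -> H)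
  (Hs : forall (f : nat -> G) N, sum_n (fun i => op (f i)) N = op (sum_n f N))
  k (g : fam k G) N : box_sum k (fam_map k op g) N = op (box_sum k g N).
Proof.
  induction k; simpl; auto. rewrite <- Hs. apply sum_n_ext. intros. apply IHk.
Qed.

Lemma box_sum_ext {G : AbelianMonoid} k (g h : fam k G) N :
  fam_rel k eq g h -> box_sum k g N = box_sum k h N.
Proof. apply (box_sum_rel eq). intros. now apply sum_n_ext. Qed.

Lemma box_sum_zero {G : AbelianMonoid} k N : box_sum k (fam_const k (@zero G)) N = zero.
Proof.
  induction k; simpl; auto. rewrite (sum_n_ext _ (fun _ => zero)); auto. apply sum_n_zero.
Qed.

Lemma box_sum_trunc {G : AbelianMonoid} k (g : fam k G) N0 N1 :
  (N0 <= N1)%nat -> box_sum k (fam_trunc k zero N0 g) N1 = box_sum k g N0.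
Proof.
  revert g. induction k; intros g H; simpl; auto.
  rewrite (sum_n_ext _ (fun i => if Nat.leb i N0 then box_sum k (g i) N0 else zero)).
  - now apply sum_n_if_le.
  - intros n. destruct (Nat.leb n N0); auto. apply box_sum_zero.
Qed.

Lemma box_sum_sum {G : AbelianMonoid} k (g : nat -> fam k G) M N :
  box_sum k (fam_sum k g M) N = sum_n (fun j => box_sum k (g j) N) M.
Proof.
  revert g. induction k; intros g; simpl; auto.
  rewrite (sum_n_ext _ (fun i => sum_n (fun j => box_sum k (g j i) N) M)).
  - apply sum_n_switch.
  - intros. apply IHk.
Qed.

Lemma box_sum_norm k (g : fam k C) (h : fam k R) N :
  fam_rel k (fun u v => Cmod u <= v)%R g h -> (Cmod (box_sum k g N) <= box_sum k h N)%R.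
Proof. apply (box_sum_rel (fun (u : C) (v : R) => Cmod u <= v)%R). intros. now apply Cmod_sum_le. Qed.

Lemma box_sum_le k (g h : fam k R) N : fam_rel k Rle g h -> (box_sum k g N <= box_sum k h N)%R.
Proof. apply (box_sum_rel Rle). intros. now apply sum_n_m_le. Qed.

Lemma box_sum_scalR k (g : fam k R) (c : R) N :
  box_sum k (fam_map k (fun u => u * c)%R g) N = (box_sum k g N * c)%R.
Proof.
  apply (box_sum_map (fun u : R => u * c)%R). intros f M.
  induction M; [now rewrite !sum_O | rewrite !sumR_Sn, IHM; ring_at R].
Qed.

Lemma box_sum_scalC k (g : fam k C) (c : C) N :
  box_sum k (fam_map k (fun u => c * u) g) N = c * box_sum k g N.
Proof. apply (box_sum_map (fun u : C => c * u)). intros. apply sumC_scal. Qed.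

Lemma box_sum_mono k (w : fam k R) N0 N1 :
  fam_rel k (fun _ v => 0 <= v)%R w w -> (N0 <= N1)%nat -> (box_sum k w N0 <= box_sum k w N1)%R.
Proof.
  intros Hw Hle. rewrite <- (box_sum_trunc k w Hle). apply box_sum_le.
  revert w Hw. induction k; simpl; [intros; lra|].
  intros w Hw i. destruct (Nat.leb i N0); auto.
  specialize (Hw i). generalize (w i) Hw. clear. induction k; simpl; auto.
Qed.

Lemma box_sum_increment k (g h : fam k C) (w : fam k R) N0 N1 :
  (N0 <= N1)%nat ->
  fam_rel k (fun u v => Cmod u <= v)%R h w ->
  fam_rel k eq (fam_trunc k (RtoC 0) N0 h) (fam_trunc k (RtoC 0) N0 g) ->
  (Cmod (box_sum k h N1 - box_sum k g N0) <= box_sum k w N1 - box_sum k w N0)%R.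
Proof.
  intros Hle. revert g h w. induction k; simpl; intros g h w Hh Hc.
  - subst. replace (g - g) with (RtoC 0) by Cring. rewrite Cmod_0. lra.
  - rewrite <- (sum_n_if_le (G := C_AbelianMonoid) (fun i => box_sum k (g i) N0) Hle).
    rewrite <- (sum_n_if_le (G := R_AbelianMonoid) (fun i => box_sum k (w i) N0) Hle).
    rewrite <- sumC_minus, <- sumR_minus. apply Cmod_sum_le. intros i.
    specialize (Hc i). destruct (Nat.leb i N0).
    + now apply IHk.
    + change (Cmod (box_sum k (h i) N1 - RtoC 0) <= box_sum k (w i) N1 - 0)%R.
      rewrite Rminus_0_r, (Cminus_0_r (box_sum k (h i) N1)). now apply box_sum_norm.
Qed.

Definition conv (u : nat -> C) (l : C) : Prop := filterlim u eventually (locally l).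

Lemma conv_eps u l : conv u l <->
  forall eps : R, (0 < eps)%R -> exists N, forall n, (N <= n)%nat -> (Cmod (u n - l) < eps)%R.
Proof.
  unfold conv. rewrite filterlim_locally_ball_norm. split.
  - intros H eps Heps. exact (H (mkposreal eps Heps)).
  - intros H eps. exact (H eps (cond_pos eps)).
Qed.

Lemma conv_unique u l1 l2 : conv u l1 -> conv u l2 -> l1 = l2.
Proof. exact (@filterlim_locally_unique _ _ C_NormedModule _ _ u l1 l2). Qed.

Lemma conv_const c : conv (fun _ => c) c.
Proof. apply filterlim_const. Qed.

Lemma conv_ext u v l N0 : (forall n, (N0 <= n)%nat -> u n = v n) -> conv u l -> conv v l.
Proof. intros H. apply filterlim_ext_loc. now exists N0. Qed.

Lemma conv_plus u v lu lv : conv u lu -> conv v lv -> conv (fun n => u n + v n) (lu + lv).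
Proof. intros Hu Hv. exact (filterlim_comp_2 _ _ Cplus Hu Hv (filterlim_plus lu lv)). Qed.

Lemma conv_scal c u l : conv u l -> conv (fun n => c * u n) (c * l).
Proof.
  intros Hu. eapply filterlim_comp; [exact Hu | exact (@filterlim_scal_r _ C_NormedModule c l)].
Qed.

Lemma conv_minus u v lu lv : conv u lu -> conv v lv -> conv (fun n => u n - v n) (lu - lv).
Proof.
  intros Hu Hv. replace (lu - lv) with (lu + RtoC (-1) * lv) by ring.
  apply conv_ext with (N0 := O) (u := fun n => u n + RtoC (-1) * v n); [intros; ring|].
  now apply conv_plus, conv_scal.
Qed.

Lemma conv_sum (u : nat -> nat -> C) (l : nat -> C) M :
  (forall j, conv (u j) (l j)) -> conv (fun N => sum_n (fun j => u j N) M) (sum_n l M).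
Proof.
  intros H. induction M as [|M IH].
  - rewrite sum_O. apply conv_ext with (N0 := O) (u := u O); [intros; now rewrite sum_O | apply H].
  - rewrite sumC_Sn. apply conv_ext with (N0 := O) (u := fun N => sum_n (fun j => u j N) M + u (S M) N).
    + intros. now rewrite sumC_Sn.
    + now apply conv_plus.
Qed.

(** Closed balls are closed: a bound holding eventually passes to the limit. *)
Lemma conv_le (u : nat -> C) l z B N0 :
  conv u l -> (forall n, (N0 <= n)%nat -> Cmod (u n - z) <= B)%R -> (Cmod (l - z) <= B)%R.
Proof.
  intros Hu Hb. destruct (Rle_lt_dec (Cmod (l - z)) B) as [|Hlt]; auto. exfalso.
  destruct (proj1 (conv_eps u l) Hu (Cmod (l - z) - B)%R ltac:(lra)) as [N HN].
  specialize (HN (N + N0)%nat ltac:(lia)). specialize (Hb (N + N0)%nat ltac:(lia)).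
  pose proof (Cmod_triangle (l - u (N + N0)%nat) (u (N + N0)%nat - z)) as Htri.
  replace (l - u (N + N0)%nat + (u (N + N0)%nat - z)) with (l - z) in Htri by ring.
  rewrite <- Cmod_opp in HN. replace (- (u (N + N0)%nat - l)) with (l - u (N + N0)%nat) in HN by ring.
  lra.
Qed.

Lemma sup_approx (V : nat -> R) B : (forall n, V n <= B)%R ->
  exists L, (forall n, V n <= L)%R /\ forall eps, (0 < eps)%R -> exists N, (L - eps < V N)%R.
Proof.
  intros HB. destruct (completeness (fun x => exists n, x = V n)) as [L [HL1 HL2]].
  - exists B. intros x [n ->]. auto.
  - exists (V O). eauto.
  - exists L. split; [intros n; apply HL1; eauto|].
    intros eps He. apply NNPP. intros Hn.
    assert (L <= L - eps)%R; [|lra]. apply HL2. intros x [n ->].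
    destruct (Rlt_le_dec (L - eps) (V n)); auto. exfalso; eauto.
Qed.

Lemma conv_dominated (u : nat -> C) (V : nat -> R) B :
  (forall n m, (n <= m)%nat -> Cmod (u m - u n) <= V m - V n)%R ->
  (forall n, V n <= B)%R -> exists l, conv u l.
Proof.
  intros Hc HB. destruct (sup_approx V HB) as [L [HL1 HL2]].
  apply (filterlim_locally_cauchy (U := C_CompleteNormedModule) (F := eventually) u).
  intros eps. destruct (HL2 eps (cond_pos eps)) as [N HN].
  exists (fun n => (N <= n)%nat). split; [now exists N|].
  intros n m Hn Hm. apply (@norm_compat1 _ C_NormedModule). change (Cmod (u m - u n) < eps)%R.
  destruct (Nat.le_ge_cases n m) as [Hnm|Hnm].
  - pose proof (Hc n m Hnm). pose proof (Hc N n Hn). pose proof (Cmod_ge_0 (u n - u N)).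
    pose proof (HL1 m). lra.
  - rewrite <- Cmod_opp. replace (- (u m - u n)) with (u n - u m) by ring.
    pose proof (Hc m n Hnm). pose proof (Hc N m Hm). pose proof (Cmod_ge_0 (u m - u N)).
    pose proof (HL1 n). lra.
Qed.

Lemma pown_S (a : C) n : pow_n a (S n) = a * pow_n a n.
Proof. reflexivity. Qed.

Lemma pown_0 (a : C) : pow_n a 0 = RtoC 1.
Proof. reflexivity. Qed.

Lemma pown_add (a : C) m n : pow_n a (m + n) = pow_n a m * pow_n a n.
Proof. exact (@pow_n_plus C_Ring a m n). Qed.

Lemma pown_mult (a b : C) n : pow_n (a * b) n = pow_n a n * pow_n b n.
Proof. induction n; [change (RtoC 1 = RtoC 1 * RtoC 1); ring | rewrite !pown_S, IHn; Cring]. Qed.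

Lemma pown_RtoC (q : R) n : pow_n (RtoC q) n = RtoC (q ^ n).
Proof. induction n; [reflexivity | rewrite pown_S, IHn; simpl; now rewrite RtoC_mult]. Qed.

Lemma Cmod_pown (a : C) n : Cmod (pow_n a n) = (Cmod a ^ n)%R.
Proof. induction n; [apply Cmod_1 | rewrite pown_S, Cmod_mult, IHn; reflexivity]. Qed.

Lemma Cmod_mult_pown_le (z a : C) (B r : R) n :
  (Cmod z <= B)%R -> (Cmod a <= r)%R -> (Cmod (z * pow_n a n) <= B * r ^ n)%R.
Proof.
  intros Hz Ha. rewrite Cmod_mult, Cmod_pown.
  apply Rmult_le_compat; auto using Cmod_ge_0, pow_le.
  apply pow_incr. split; auto using Cmod_ge_0.
Qed.

(** * The power series of f and its Taylor coefficients in (x,y) *)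

Section Families.
Variable cf : coef7.

Definition term7 (a b c d e x y : C) : fam 7 C :=
  fun i1 i2 i3 i4 i5 i6 i7 => cf i1 i2 i3 i4 i5 i6 i7 * pow_n a i1 * pow_n b i2 * pow_n c i3
    * pow_n d i4 * pow_n e i5 * pow_n x i6 * pow_n y i7.

Definition major7 (r : R) : fam 7 R :=
  fun i1 i2 i3 i4 i5 i6 i7 =>
    (Cmod (cf i1 i2 i3 i4 i5 i6 i7) * r ^ (i1 + i2 + i3 + i4 + i5 + i6 + i7))%R.

Definition slice5 (a b c d e : C) (j k : nat) : fam 5 C :=
  fun i1 i2 i3 i4 i5 => cf i1 i2 i3 i4 i5 j k * pow_n a i1 * pow_n b i2 * pow_n c i3
    * pow_n d i4 * pow_n e i5.

Definition slice_major5 (r : R) (j k : nat) : fam 5 R :=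
  fun i1 i2 i3 i4 i5 => (Cmod (cf i1 i2 i3 i4 i5 j k) * r ^ (i1 + i2 + i3 + i4 + i5))%R.

Lemma major7_nonneg r : (0 <= r)%R -> fam_rel 7 (fun _ v => 0 <= v)%R (major7 r) (major7 r).
Proof. intros Hr. simpl. intros. apply Rmult_le_pos; auto using Cmod_ge_0, pow_le. Qed.

Lemma slice_major5_nonneg r j k :
  (0 <= r)%R -> fam_rel 5 (fun _ v => 0 <= v)%R (slice_major5 r j k) (slice_major5 r j k).
Proof. intros Hr. simpl. intros. apply Rmult_le_pos; auto using Cmod_ge_0, pow_le. Qed.

Lemma term7_le r a b c d e x y :
  (Cmod a <= r)%R -> (Cmod b <= r)%R -> (Cmod c <= r)%R -> (Cmod d <= r)%R ->
  (Cmod e <= r)%R -> (Cmod x <= r)%R -> (Cmod y <= r)%R ->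
  fam_rel 7 (fun u v => Cmod u <= v)%R (term7 a b c d e x y) (major7 r).
Proof.
  intros. simpl. intros. unfold term7, major7. rewrite !pow_add, <- !Rmult_assoc.
  repeat apply Cmod_mult_pown_le; auto using Rle_refl.
Qed.

Lemma slice5_le r a b c d e j k :
  (Cmod a <= r)%R -> (Cmod b <= r)%R -> (Cmod c <= r)%R -> (Cmod d <= r)%R ->
  (Cmod e <= r)%R -> fam_rel 5 (fun u v => Cmod u <= v)%R (slice5 a b c d e j k) (slice_major5 r j k).
Proof.
  intros. simpl. intros. unfold slice5, slice_major5. rewrite !pow_add, <- !Rmult_assoc.
  repeat apply Cmod_mult_pown_le; auto using Rle_refl.
Qed.
End Families.

Lemma analytic_conv cf r f a b c d e x y : analytic7_rep cf r f ->
  (Cmod a < r)%R -> (Cmod b < r)%R -> (Cmod c < r)%R -> (Cmod d < r)%R ->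
  (Cmod e < r)%R -> (Cmod x < r)%R -> (Cmod y < r)%R ->
  conv (box_sum 7 (term7 cf a b c d e x y)) (f a b c d e x y).
Proof. intros [_ [_ H]]. apply H. Qed.

Lemma analytic_bound cf r f : analytic7_rep cf r f ->
  exists M, forall N, (box_sum 7 (major7 cf r) N <= M)%R.
Proof. intros [_ [[M H] _]]. exists M. exact H. Qed.

(** The Taylor coefficient of [x^j y^k] in [f(a,b,c,d,e,x,y)]: the sum of the
    slice series, chosen by [epsilon] (uniquely determined when it exists). *)
Definition Acoef (cf : coef7) (a b c d e : C) (j k : nat) : C :=
  epsilon (inhabits (RtoC 0)) (fun v => taylor_xy_is cf a b c d e j k v).

Lemma Acoef_unique cf a b c d e j k v :
  taylor_xy_is cf a b c d e j k v -> Acoef cf a b c d e j k = v.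
Proof.
  intros H. apply (conv_unique (u := box_sum 5 (slice5 cf a b c d e j k))); [|exact H].
  apply (epsilon_spec (inhabits (RtoC 0)) (fun v => taylor_xy_is cf a b c d e j k v)).
  now exists v.
Qed.

Section Slices.
Variables (cf : coef7) (r M : R).
Hypothesis Hr : (0 < r)%R.
Hypothesis HM : forall N, (box_sum 7 (major7 cf r) N <= M)%R.

(** The majorant of the (j,k) slice is part of the 7-fold majorant. *)
Lemma slice_bound j k N : (box_sum 5 (slice_major5 cf r j k) N * r ^ (j + k) <= M)%R.
Proof.
  set (N' := (N + j + k)%nat).
  apply Rle_trans with (box_sum 5 (slice_major5 cf r j k) N' * r ^ (j + k))%R.
  { apply Rmult_le_compat_r; [apply pow_le; lra|].
    apply box_sum_mono; [apply slice_major5_nonneg; lra | unfold N'; lia]. }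
  rewrite <- box_sum_scalR.
  set (sl := fun i1 i2 i3 i4 i5 i6 i7 : nat =>
     if Nat.eqb i6 j then if Nat.eqb i7 k then major7 cf r i1 i2 i3 i4 i5 i6 i7 else 0%R else 0%R).
  apply Rle_trans with (box_sum 7 sl N'); [apply Req_le|].
  - change (box_sum 7 sl N') with (box_sum 5 (fun i1 i2 i3 i4 i5 =>
      sum_n (fun i6 => sum_n (fun i7 => sl i1 i2 i3 i4 i5 i6 i7) N') N') N').
    apply box_sum_ext. simpl. intros i1 i2 i3 i4 i5. unfold sl.
    rewrite (sum_n_ext _ (fun i6 => if Nat.eqb i6 j then
      sum_n (fun i7 => if Nat.eqb i7 k then major7 cf r i1 i2 i3 i4 i5 i6 i7 else 0%R) N' else 0%R)).
    2: { intros i6. destruct (Nat.eqb i6 j); [reflexivity|]. apply (@sum_n_zero R_AbelianMonoid). }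
    rewrite (@sum_n_if_eq R_AbelianMonoid) by (unfold N'; lia).
    rewrite (@sum_n_if_eq R_AbelianMonoid) by (unfold N'; lia).
    unfold major7, slice_major5. rewrite !pow_add. ring.
  - apply Rle_trans with (box_sum 7 (major7 cf r) N'); auto. apply box_sum_le.
    pose proof (major7_nonneg cf (Rlt_le _ _ Hr)) as Hw. simpl in Hw |- *.
    intros i1 i2 i3 i4 i5 i6 i7. unfold sl.
    destruct (Nat.eqb i6 j), (Nat.eqb i7 k); auto using Rle_refl.
Qed.

Lemma Acoef_spec a b c d e j k :
  (Cmod a <= r)%R -> (Cmod b <= r)%R -> (Cmod c <= r)%R -> (Cmod d <= r)%R -> (Cmod e <= r)%R ->
  taylor_xy_is cf a b c d e j k (Acoef cf a b c d e j k).
Proof.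
  intros Ha Hb Hc Hd He.
  assert (Hp : (0 < r ^ (j + k))%R) by (apply pow_lt; lra).
  destruct (@conv_dominated (box_sum 5 (slice5 cf a b c d e j k))
     (box_sum 5 (slice_major5 cf r j k)) (M / r ^ (j + k))%R) as [A HA].
  - intros n m Hnm. apply box_sum_increment; auto.
    + now apply slice5_le.
    + now apply fam_rel_refl.
  - intros N. pose proof (slice_bound j k N).
    apply Rmult_le_reg_r with (r ^ (j + k))%R; auto. field_simplify; lra.
  - rewrite (Acoef_unique HA). exact HA.
Qed.
End Slices.

(** * Regrouping the series of f by total degree in (x,y) *)

Definition hpart (cf : coef7) (a b c d e : C) (n : nat) (x y : C) : C :=
  sum_n (fun k => Acoef cf a b c d e (n - k) k * pow_n x (n - k) * pow_n y k) n.

Lemma triangle_sum_extend (T : nat -> nat -> C) N N' : (N <= N')%nat ->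
  sum_n (fun j => sum_n (fun k => if Nat.leb (j + k) N then T j k else RtoC 0) N') N' =
  sum_n (fun j => sum_n (fun k => if Nat.leb (j + k) N then T j k else RtoC 0) N) N.
Proof.
  intros H. rewrite (@sum_n_vanishing_tail C_AbelianMonoid _ _ _ H).
  - apply sum_n_ext_loc. intros j Hj. apply (@sum_n_vanishing_tail C_AbelianMonoid); auto.
    intros k Hk. destruct (Nat.leb_spec (j + k) N); [lia | reflexivity].
  - intros j Hj. rewrite <- (@sum_n_zero C_AbelianMonoid N').
    apply sum_n_ext. intros k. destruct (Nat.leb_spec (j + k) N); [lia | reflexivity].
Qed.

Lemma triangle_to_diagonals (g : nat -> nat -> C) N :
  sum_n (fun j => sum_n (fun k => if Nat.leb (j + k) N then g j k else RtoC 0) N) N =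
  sum_n (fun n => sum_n (fun k => g (n - k)%nat k) n) N.
Proof.
  induction N as [|N IH]; [now rewrite !sum_O|].
  rewrite (sumC_Sn (fun n => sum_n (fun k => g (n - k)%nat k) n)), <- IH.
  rewrite (sum_n_ext _ (fun j => sum_n (fun k => if Nat.leb (j + k) N then g j k else RtoC 0) (S N)
     + sum_n (fun k => if Nat.eqb (j + k) (S N) then g j k else RtoC 0) (S N))).
  2: { intros j. rewrite <- sumC_plus. apply sum_n_ext. intros k.
       destruct (Nat.leb_spec (j + k) (S N)), (Nat.leb_spec (j + k) N),
                (Nat.eqb_spec (j + k) (S N)); try lia; Cring. }
  rewrite sumC_plus, triangle_sum_extend by lia. f_equal.
  rewrite sum_n_switch. apply sum_n_ext_loc. intros k Hk.
  rewrite <- (@sum_n_if_eq C_AbelianMonoid (fun j => g j k) (S N - k)%nat (S N)) by lia.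
  apply sum_n_ext. intros j.
  destruct (Nat.eqb_spec (j + k) (S N)), (Nat.eqb_spec j (S N - k)%nat); auto; lia.
Qed.

Definition tri_mono (x y : C) (N j k : nat) : C :=
  if Nat.leb (j + k) N then pow_n x j * pow_n y k else RtoC 0.

Section Regrouping.
Variables (cf : coef7) (r M : R) (f : C -> C -> C -> C -> C -> C -> C -> C).
Hypothesis Hr : (0 < r)%R.
Hypothesis HM : forall N, (box_sum 7 (major7 cf r) N <= M)%R.
Hypothesis hf : analytic7_rep cf r f.
Variables (a b c d e x y : C).
Hypotheses (Ha : (Cmod a < r)%R) (Hb : (Cmod b < r)%R) (Hc : (Cmod c < r)%R)
  (Hd : (Cmod d < r)%R) (He : (Cmod e < r)%R) (Hx : (Cmod x < r)%R) (Hy : (Cmod y < r)%R).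

Definition trunc_deg (N : nat) : fam 7 C :=
  fun i1 i2 i3 i4 i5 i6 i7 =>
    if Nat.leb (i6 + i7) N then term7 cf a b c d e x y i1 i2 i3 i4 i5 i6 i7 else RtoC 0.

(** [trunc_deg N] agrees with the full family on the box [{0..N/2}^7], so its
    box sums stay close to the box sum of [f]'s series on that box. *)
Lemma trunc_deg_close N N' L : (N <= N')%nat -> (forall n, box_sum 7 (major7 cf r) n <= L)%R ->
  (Cmod (box_sum 7 (trunc_deg N) N' - box_sum 7 (term7 cf a b c d e x y) (N / 2))
     <= L - box_sum 7 (major7 cf r) (N / 2))%R.
Proof.
  intros H HL. eapply Rle_trans.
  - apply box_sum_increment with (w := major7 cf r).
    + apply Nat.le_trans with N; auto. apply Nat.Div0.div_le_upper_bound; lia.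
    + pose proof (term7_le cf (r := r) a b c d e x y) as Ht.
      pose proof (major7_nonneg cf (Rlt_le _ _ Hr)) as Hw.
      cbn [fam_rel] in *. intros i1 i2 i3 i4 i5 i6 i7. unfold trunc_deg.
      destruct (Nat.leb (i6 + i7) N); [apply Ht; lra | rewrite Cmod_0; apply Hw].
    + cbn [fam_rel fam_trunc].
      repeat (let i := fresh "i" in let E := fresh "E" in
              intro i; destruct (Nat.leb i (N / 2)%nat) eqn:E; cbn beta iota; [|reflexivity]).
      unfold trunc_deg. destruct (Nat.leb_spec (i4 + i5) N); auto.
      apply Nat.leb_le in E4. apply Nat.leb_le in E5.
      assert (2 * (N / 2) <= N)%nat by (apply Nat.Div0.mul_div_le; lia). lia.
  - specialize (HL N'). lra.
Qed.

Lemma trunc_deg_split N N' : (N <= N')%nat ->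
  box_sum 7 (trunc_deg N) N' =
  sum_n (fun j => sum_n (fun k => tri_mono x y N j k * box_sum 5 (slice5 cf a b c d e j k) N') N) N.
Proof.
  intros H.
  change (box_sum 7 (trunc_deg N) N') with (box_sum 5 (fun i1 i2 i3 i4 i5 =>
     sum_n (fun i6 => sum_n (fun i7 => trunc_deg N i1 i2 i3 i4 i5 i6 i7) N') N') N').
  rewrite (@box_sum_ext C_AbelianMonoid 5 _ (fam_sum 5 (fun j => fam_sum 5 (fun k =>
      fam_map 5 (fun u => tri_mono x y N j k * u) (slice5 cf a b c d e j k)) N) N)).
  - rewrite box_sum_sum. apply sum_n_ext. intros j.
    rewrite box_sum_sum. apply sum_n_ext. intros k. apply box_sum_scalC.
  - cbn [fam_rel fam_sum fam_map]. intros. unfold trunc_deg.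
    rewrite triangle_sum_extend by auto.
    apply sum_n_ext. intros j. apply sum_n_ext. intros k. unfold tri_mono.
    destruct (Nat.leb (j + k) N); unfold term7, slice5; Cring.
Qed.

Lemma trunc_deg_limit N :
  conv (box_sum 7 (trunc_deg N)) (sum_n (fun n => hpart cf a b c d e n x y) N).
Proof.
  unfold hpart.
  rewrite <- (triangle_to_diagonals (fun j k => Acoef cf a b c d e j k * pow_n x j * pow_n y k)).
  apply conv_ext with (N0 := N)
    (u := fun N' => sum_n (fun j => sum_n (fun k =>
            tri_mono x y N j k * box_sum 5 (slice5 cf a b c d e j k) N') N) N).
  { intros n Hn. symmetry. now apply trunc_deg_split. }
  rewrite (sum_n_ext _ (fun j => sum_n (fun k => tri_mono x y N j k * Acoef cf a b c d e j k) N)).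
  2: { intros j. apply sum_n_ext. intros k. unfold tri_mono. destruct (Nat.leb (j + k) N); Cring. }
  apply (conv_sum (fun j N' => sum_n (fun k => _ * box_sum 5 (slice5 cf a b c d e j k) N') N)).
  intros j. apply (conv_sum (fun k N' => _ * box_sum 5 (slice5 cf a b c d e j k) N')).
  intros k. apply conv_scal, (Acoef_spec Hr HM); lra.
Qed.

Theorem regrouping : is_series (fun n => hpart cf a b c d e n x y) (f a b c d e x y).
Proof.
  pose proof (@analytic_conv cf r f a b c d e x y hf Ha Hb Hc Hd He Hx Hy) as Hf.
  destruct (@sup_approx (box_sum 7 (major7 cf r)) M HM) as [L [HL1 HL2]].
  assert (Hbd : forall N,
    (Cmod (sum_n (fun n => hpart cf a b c d e n x y) N - f a b c d e x y) <=
     (L - box_sum 7 (major7 cf r) (N / 2)%nat)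
     + Cmod (box_sum 7 (term7 cf a b c d e x y) (N / 2)%nat - f a b c d e x y))%R).
  { intros N. apply conv_le with (N0 := N) (u := box_sum 7 (trunc_deg N)); [apply trunc_deg_limit|].
    intros N' HN'.
    pose proof (trunc_deg_close HN' HL1) as H0.
    pose proof (Cmod_triangle (box_sum 7 (trunc_deg N) N' - box_sum 7 (term7 cf a b c d e x y) (N / 2)%nat)
                  (box_sum 7 (term7 cf a b c d e x y) (N / 2)%nat - f a b c d e x y)) as H1.
    replace (box_sum 7 (trunc_deg N) N' - box_sum 7 (term7 cf a b c d e x y) (N / 2)%nat
             + (box_sum 7 (term7 cf a b c d e x y) (N / 2)%nat - f a b c d e x y))
      with (box_sum 7 (trunc_deg N) N' - f a b c d e x y) in H1 by Cring.
    lra. }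
  apply conv_eps. intros eps Heps.
  destruct (HL2 (eps / 2)%R ltac:(lra)) as [K1 HK1].
  destruct (proj1 (conv_eps _ _) Hf (eps / 2)%R ltac:(lra)) as [K2 HK2].
  exists (2 * (K1 + K2))%nat. intros N HN.
  assert (Hh : (K1 + K2 <= N / 2)%nat).
  { apply Nat.le_trans with ((2 * (K1 + K2)) / 2)%nat.
    - rewrite Nat.mul_comm, Nat.div_mul; lia.
    - now apply Nat.Div0.div_le_mono. }
  eapply Rle_lt_trans; [apply Hbd|].
  assert (box_sum 7 (major7 cf r) K1 <= box_sum 7 (major7 cf r) (N / 2)%nat)%R.
  { apply box_sum_mono; [apply major7_nonneg; lra | lia]. }
  specialize (HK2 (N / 2)%nat ltac:(lia)). lra.
Qed.
End Regrouping.

(** * Identity theorem for power series in one variable *)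

Lemma series_terms_bounded (u : nat -> C) l :
  is_series u l -> exists K, (0 <= K)%R /\ forall n, (Cmod (u n) <= K)%R.
Proof.
  intros Hu. destruct (@filterlim_bounded _ C_NormedModule (sum_n u)) as [B HB]; [now exists l|].
  change (forall n, Cmod (sum_n u n) <= B)%R in HB.
  exists (2 * B)%R. pose proof (HB O) as H0. pose proof (Rle_trans _ _ _ (Cmod_ge_0 _) H0).
  split; [lra|]. intros [|n].
  - rewrite sum_O in H0. lra.
  - replace (u (S n)) with (sum_n u (S n) + - sum_n u n) by (rewrite sumC_Sn; ring).
    eapply Rle_trans; [apply Cmod_triangle|]. rewrite Cmod_opp.
    pose proof (HB (S n)). pose proof (HB n). lra.
Qed.

Lemma geom_tail (q : R) m d : (0 <= q <= 1/2)%R ->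
  (sum_n (fun n => if Nat.leb n m then 0%R else q ^ n)%R (m + d)
     <= 2 * q ^ (m + 1) - 2 * q ^ (m + d + 1))%R.
Proof.
  intros Hq. induction d as [|d IH].
  - rewrite Nat.add_0_r, (sum_n_ext_loc _ (fun _ => 0%R)).
    + rewrite (@sum_n_zero R_AbelianMonoid). change (0 <= 2 * q ^ (m + 1) - 2 * q ^ (m + 1))%R. lra.
    + intros n Hn. destruct (Nat.leb_spec n m); [reflexivity | lia].
  - rewrite Nat.add_succ_r, sumR_Sn. destruct (Nat.leb_spec (S (m + d)) m); [lia|].
    replace (m + S d + 1)%nat with (m + d + 1 + 1)%nat by lia.
    replace (S (m + d)) with (m + d + 1)%nat by lia. rewrite (pow_add q (m + d + 1) 1), pow_1.
    pose proof (pow_le q (m + d + 1) ltac:(lra)). destruct Hq. nra.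
Qed.

(** If [sum b_n s^n = 0] and [b_i = 0] for [i < m], then [b_m s^m] is bounded
    by the tail [sum_(n > m) |b_n| s^n].  With [s = t0 q] and [|b_n| t0^n <= K]
    this gives [|b_m| t0^m <= 2 K q]. *)
Lemma lowest_coef_small (b : nat -> C) (t0 K q : R) m :
  (0 < t0)%R -> (0 < q <= 1/2)%R -> (forall n, Cmod (b n) * t0 ^ n <= K)%R ->
  (forall i, (i < m)%nat -> b i = RtoC 0) ->
  is_series (fun n => b n * pow_n (RtoC (t0 * q)) n) (RtoC 0) ->
  (Cmod (b m) * t0 ^ m <= 2 * K * q)%R.
Proof.
  intros Ht0 Hq HK Hlow Hser. set (s := (t0 * q)%R). set (u := fun n => b n * pow_n (RtoC s) n).
  assert (Hterm : forall n, (Cmod (u n) <= K * q ^ n)%R).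
  { intros n. unfold u. rewrite Cmod_mult, Cmod_pown, Cmod_R, Rabs_pos_eq by (unfold s; nra).
    unfold s. rewrite Rpow_mult_distr, <- Rmult_assoc.
    apply Rmult_le_compat_r; [apply pow_le; lra | apply HK]. }
  assert (Hz : (Cmod (RtoC 0 - u m) <= 2 * K * q ^ (m + 1))%R).
  { apply conv_le with (N0 := m) (u := sum_n u); [exact Hser|]. intros N HN.
    replace N with (m + (N - m))%nat by lia. set (d := (N - m)%nat).
    replace (sum_n u (m + d) - u m)
      with (sum_n (fun i => if Nat.leb i m then RtoC 0 else u i) (m + d)).
    2: { assert (Hlow' : sum_n u m = u m).
         { rewrite <- (@sum_n_if_eq C_AbelianMonoid u m m) by lia.
           apply sum_n_ext_loc. intros i Hi. destruct (Nat.eqb_spec i m); [now subst|].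
           unfold u. rewrite Hlow by lia. exact (Cmult_0_l _). }
         rewrite <- Hlow', <- (@sum_n_if_le C_AbelianMonoid u m (m + d)) by lia.
         rewrite <- sumC_minus. apply sum_n_ext. intros i. destruct (Nat.leb i m); Cring. }
    eapply Rle_trans.
    { apply (Cmod_sum_le _ (fun i => K * (if Nat.leb i m then 0%R else q ^ i))%R).
      intros i. destruct (Nat.leb i m); [rewrite Cmod_0; lra | apply Hterm]. }
    rewrite (@sum_n_mult_l R_Ring). change (K * sum_n (fun i => if Nat.leb i m then 0 else q ^ i)
       (m + d) <= 2 * K * q ^ (m + 1))%R.
    pose proof (geom_tail m d (conj (Rlt_le _ _ (proj1 Hq)) (proj2 Hq))).
    pose proof (pow_le q (m + d + 1) ltac:(lra)).
    assert (0 <= K)%R by (eapply Rle_trans; [|apply (HK O)]; apply Rmult_le_pos; auto using Cmod_ge_0, pow_le with real).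
    nra. }
  replace (RtoC 0 - u m) with (- u m) in Hz by ring.
  unfold u in Hz. rewrite Cmod_opp, Cmod_mult, Cmod_pown, Cmod_R, Rabs_pos_eq in Hz by (unfold s; nra).
  unfold s in Hz. rewrite Rpow_mult_distr, pow_add, pow_1 in Hz.
  pose proof (pow_lt q m ltac:(lra)). pose proof (Cmod_ge_0 (b m)). pose proof (pow_lt t0 m Ht0).
  apply Rmult_le_reg_r with (q ^ m)%R; auto. nra.
Qed.

Lemma series_unique (b : nat -> C) (rho : R) : (0 < rho)%R ->
  (forall t : C, (Cmod t < rho)%R -> is_series (fun n => b n * pow_n t n) (RtoC 0)) ->
  forall n, b n = RtoC 0.
Proof.
  intros Hrho Hs. set (t0 := (rho / 2)%R). assert (Ht0 : (0 < t0)%R) by (unfold t0; lra).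
  assert (Hsmall : forall q, (0 < q <= 1)%R -> (Cmod (RtoC (t0 * q)) < rho)%R).
  { intros q Hq. rewrite Cmod_R, Rabs_pos_eq; unfold t0; nra. }
  destruct (series_terms_bounded (Hs (RtoC (t0 * 1)) (Hsmall 1%R ltac:(lra)))) as [K [HK0 HK]].
  assert (HK' : forall n, (Cmod (b n) * t0 ^ n <= K)%R).
  { intros n. specialize (HK n). rewrite Cmod_mult, Cmod_pown, Cmod_R, Rabs_pos_eq, Rmult_1_r in HK;
    unfold t0 in *; lra. }
  intros n. induction n as [m IH] using (well_founded_induction Wf_nat.lt_wf).
  destruct (classic (b m = RtoC 0)) as [|Hne]; auto. exfalso.
  apply Cmod_gt_0 in Hne. set (beta := (Cmod (b m) * t0 ^ m)%R).
  assert (Hb0 : (0 < beta)%R) by (unfold beta; pose proof (pow_lt t0 m Ht0); nra).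
  set (q := Rmin (1/2) (beta / (4 * K + 4))).
  assert (Hq : (0 < q <= 1/2)%R).
  { unfold q. split; [apply Rmin_glb_lt; [lra | apply Rdiv_lt_0_compat; lra] | apply Rmin_l]. }
  pose proof (@lowest_coef_small b t0 K q m Ht0 Hq HK' IH (Hs _ (Hsmall q ltac:(lra)))) as Hest. fold beta in Hest.
  assert (q <= beta / (4 * K + 4))%R by apply Rmin_r.
  assert (q * (4 * K + 4) <= beta)%R.
  { apply Rmult_le_reg_r with (/ (4 * K + 4))%R; [apply Rinv_0_lt_compat; lra|].
    field_simplify; lra. }
  nra.
Qed.

(** * The q-difference operator of (i) *)

Lemma telescope (al be : nat -> C) n : al O = RtoC 0 -> be n = RtoC 0 ->
  (forall k, (k < n)%nat -> al (S k) = be k) -> sum_n (fun k => al k - be k) n = RtoC 0.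
Proof.
  intros H0 Hn Hs. rewrite sumC_minus. destruct n as [|n].
  - rewrite !sum_O, H0, Hn. Cring.
  - rewrite (@sum_n_shift C_AbelianMonoid al n), (sum_n_ext_loc _ be).
    + rewrite sumC_Sn, Hn, H0. Cring.
    + intros k Hk. apply Hs. lia.
Qed.

Lemma series_finite (u : nat -> C) M :
  (forall m, (M < m)%nat -> u m = RtoC 0) -> is_series u (sum_n u M).
Proof.
  intros H. apply conv_ext with (N0 := M) (u := fun _ => sum_n u M); [|apply conv_const].
  intros n Hn. symmetry. now apply (@sum_n_vanishing_tail C_AbelianMonoid).
Qed.

Section QOperator.
Variables (q : R) (a b c d e : C).
Let Q := RtoC q.

Definition qop_lhs (G : C -> C -> C) (x y : C) : C :=
  x * (G x y - G x (y * Q)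
       - (d + e) / Q * (G x (y * Q) - G x (y * Q * Q))
       + d * e / (Q * Q) * (G x (y * Q * Q) - G x (y * Q * Q * Q))).
Definition qop_rhs (G : C -> C -> C) (x y : C) : C :=
  y * ((G x y - G (x * Q) y)
         - (a + b + c) * (G x (y * Q) - G (x * Q) (y * Q))
         + (a * b + a * c + b * c) * (G x (y * Q * Q) - G (x * Q) (y * Q * Q))
         - a * b * c * (G x (y * Q * Q * Q) - G (x * Q) (y * Q * Q * Q))).
Definition qop (G : C -> C -> C) (x y : C) : C := qop_lhs G x y - qop_rhs G x y.

Lemma qeq_iff_qop f x y : qeq q f a b c d e x y <-> qop (f a b c d e) x y = RtoC 0.
Proof.
  unfold qeq, qop. fold Q.
  change (qop_lhs (f a b c d e) x y = qop_rhs (f a b c d e) x y <->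
          qop_lhs (f a b c d e) x y - qop_rhs (f a b c d e) x y = RtoC 0).
  split; intros H.
  - rewrite H. ring.
  - rewrite <- (Cplus_0_l (qop_rhs _ x y)), <- H. ring.
Qed.

Lemma qop_sum (g : nat -> C -> C -> C) n x y :
  qop (fun X Y => sum_n (fun k => g k X Y) n) x y = sum_n (fun k => qop (g k) x y) n.
Proof.
  induction n as [|n IH].
  - rewrite sum_O. unfold qop, qop_lhs, qop_rhs. now rewrite !sum_O.
  - rewrite sumC_Sn, <- IH. unfold qop, qop_lhs, qop_rhs. rewrite !sumC_Sn. ring.
Qed.

(** Eigen-factors of the two sides on the monomial [x^j y^k]. *)
Definition ell (k : nat) : C :=
  let Qk := pow_n Q k in
  (1 - Qk) - (d + e) / Q * (Qk - Qk * Qk) + d * e / (Q * Q) * (Qk * Qk - Qk * Qk * Qk).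
Definition rho (j k : nat) : C :=
  let Qk := pow_n Q k in
  (1 - pow_n Q j) * (1 - (a + b + c) * Qk + (a * b + a * c + b * c) * (Qk * Qk)
                     - a * b * c * (Qk * Qk * Qk)).

Lemma qop_monomial (A : C) j k x y :
  qop (fun X Y => A * pow_n X j * pow_n Y k) x y
  = A * pow_n x j * pow_n y k * (x * ell k - y * rho j k).
Proof. unfold qop, qop_lhs, qop_rhs, ell, rho. cbv zeta. rewrite !pown_mult. Cring. Qed.

Definition qop_hpoly (A : nat -> nat -> C) (x y : C) (n : nat) : C :=
  sum_n (fun k => A (n - k)%nat k * pow_n x (n - k) * pow_n y k
                  * (x * ell k - y * rho (n - k) k)) n.

Lemma qop_hpoly_spec (A : nat -> nat -> C) n x y :
  qop (fun X Y => sum_n (fun k => A (n - k)%nat k * pow_n X (n - k) * pow_n Y k) n) x y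
  = qop_hpoly A x y n.
Proof.
  rewrite (qop_sum (fun k X Y => A (n - k)%nat k * pow_n X (n - k) * pow_n Y k)).
  apply sum_n_ext. intros k. apply qop_monomial.
Qed.

Lemma qop_hpoly_homog A n (t u v : C) :
  qop_hpoly A (t * u) (t * v) n = pow_n t (S n) * qop_hpoly A u v n.
Proof.
  unfold qop_hpoly. rewrite <- sumC_scal. apply sum_n_ext_loc. intros k Hk.
  rewrite !pown_mult, pown_S.
  replace (pow_n t n) with (pow_n t (n - k) * pow_n t k) by (rewrite <- pown_add; f_equal; lia).
  Cring.
Qed.

Lemma ell0 : ell O = RtoC 0.
Proof. unfold ell. cbv zeta. rewrite pown_0. Cring. Qed.

Lemma rho0 k : rho O k = RtoC 0.
Proof. unfold rho. cbv zeta. rewrite pown_0. Cring. Qed.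

Definition coef_rec (A : nat -> nat -> C) (n : nat) : Prop :=
  forall k, (k < n)%nat -> A (n - S k)%nat (S k) * ell (S k) = A (n - k)%nat k * rho (n - k) k.

(** The recurrence makes [qop_hpoly] telescope to zero. *)
Lemma qop_hpoly_zero A n x y : coef_rec A n -> qop_hpoly A x y n = RtoC 0.
Proof.
  intros Hrec. unfold qop_hpoly.
  rewrite (sum_n_ext _ (fun k => A (n - k)%nat k * pow_n x (n - k) * pow_n y k * x * ell k
         - A (n - k)%nat k * pow_n x (n - k) * pow_n y k * y * rho (n - k) k)) by (intros; Cring).
  apply telescope.
  - rewrite ell0. Cring.
  - rewrite Nat.sub_diag, rho0. Cring.
  - intros k Hk.
    replace (pow_n x (n - k)) with (pow_n x (n - S k) * x)
      by (replace (n - k)%nat with (S (n - S k)) by lia; rewrite pown_S; Cring).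
    rewrite pown_S.
    transitivity (A (n - S k)%nat (S k) * ell (S k) * pow_n x (n - S k) * x * pow_n y k * y);
      [Cring|]. rewrite Hrec by auto. Cring.
Qed.

Section CoefficientComparison.
Variables (A : nat -> nat -> C) (n : nat).

(** Coefficients of [qop_hpoly A 1 w n] as a polynomial in [w]: the [x]-part
    contributes [rec_up m] and the [y]-part [rec_down m] to [w^m]. *)
Definition rec_up (m : nat) : C :=
  if Nat.leb m n then A (n - m)%nat m * ell m else RtoC 0.
Definition rec_down (m : nat) : C :=
  match m with
  | O => RtoC 0
  | S k => if Nat.leb k n then A (n - k)%nat k * rho (n - k) k else RtoC 0
  end.

Lemma qop_hpoly_in_w w :
  qop_hpoly A (RtoC 1) w n = sum_n (fun m => (rec_up m - rec_down m) * pow_n w m) (S n).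
Proof.
  rewrite (sum_n_ext _ (fun m => rec_up m * pow_n w m - rec_down m * pow_n w m)) by (intros; Cring).
  rewrite sumC_minus. unfold qop_hpoly.
  rewrite (sum_n_ext _ (fun k => A (n - k)%nat k * ell k * pow_n w k
       - A (n - k)%nat k * rho (n - k) k * pow_n w k * w)).
  2: { intros k. rewrite (pown_RtoC 1), pow1. Cring. }
  rewrite sumC_minus. f_equal.
  - rewrite sumC_Sn, (sum_n_ext_loc (fun i => rec_up i * pow_n w i)
        (fun k => A (n - k)%nat k * ell k * pow_n w k)).
    + unfold rec_up. destruct (Nat.leb_spec (S n) n); [lia|]. Cring.
    + intros k Hk. unfold rec_up. destruct (Nat.leb_spec k n); [reflexivity | lia].
  - rewrite (@sum_n_shift C_AbelianMonoid (fun m => rec_down m * pow_n w m) n).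
    rewrite (sum_n_ext_loc (fun k => rec_down (S k) * pow_n w (S k))
        (fun k => A (n - k)%nat k * rho (n - k) k * pow_n w k * w)).
    + simpl rec_down. Cring.
    + intros k Hk. cbn [rec_down]. destruct (Nat.leb_spec k n); [|lia]. rewrite pown_S. Cring.
Qed.

(** If [qop] kills the homogeneous polynomial of degree [n] on a disc, its
    coefficients satisfy the recurrence (identity theorem in [w]). *)
Lemma coef_rec_of_vanishing :
  (forall w, (Cmod w < 1)%R -> qop_hpoly A (RtoC 1) w n = RtoC 0) -> coef_rec A n.
Proof.
  intros H k Hk.
  assert (Hc : forall m, rec_up m - rec_down m = RtoC 0).
  { apply (@series_unique _ 1%R); [lra|]. intros t Ht.
    rewrite <- (H t Ht), qop_hpoly_in_w. apply series_finite.
    intros [|m] Hm; [lia|]. unfold rec_up, rec_down.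
    destruct (Nat.leb_spec (S m) n), (Nat.leb_spec m n); try lia. Cring. }
  specialize (Hc (S k)). unfold rec_up, rec_down in Hc.
  destruct (Nat.leb_spec (S k) n), (Nat.leb_spec k n); try lia.
  rewrite <- (Cplus_0_l (A (n - k)%nat k * rho (n - k) k)), <- Hc. ring.
Qed.
End CoefficientComparison.
End QOperator.

(** * The coefficients of phi_n solve the recurrence *)

Lemma RtoC_neq_0 (s : R) : s <> 0%R -> RtoC s <> RtoC 0.
Proof. intros H E. apply (f_equal fst) in E. simpl in E. auto. Qed.

Lemma Cmult_reg_r (x y l : C) : l <> RtoC 0 -> x * l = y * l -> x = y.
Proof. intros Hl H. replace x with (x * l * / l) by (field; auto). rewrite H. field; auto. Qed.

Section PhiRecurrence.
Variables (q : R) (a b c d e : C).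
Hypotheses (hq0 : (0 < q)%R) (hq1 : (q < 1)%R) (hd : (Cmod d < 1)%R) (he : (Cmod e < 1)%R).
Let Q := RtoC q.

Lemma CmodQ : (Cmod Q < 1)%R.
Proof. unfold Q. rewrite Cmod_R, Rabs_pos_eq; lra. Qed.

Lemma qfactor_neq_0 (al : C) m : (Cmod al < 1)%R -> RtoC 1 - al * RtoC (q ^ m) <> RtoC 0.
Proof.
  intros H E. assert (Hq : (0 <= q ^ m <= 1)%R).
  { split; [apply pow_le; lra | rewrite <- (pow1 m); apply pow_incr; lra]. }
  assert (Hal : al * RtoC (q ^ m) = RtoC 1).
  { replace (al * RtoC (q ^ m)) with (RtoC 1 - (RtoC 1 - al * RtoC (q ^ m))) by ring.
    rewrite E. ring. }
  apply (f_equal Cmod) in Hal. rewrite Cmod_mult, Cmod_R, Cmod_1, Rabs_pos_eq in Hal by lra.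
  pose proof (Cmod_ge_0 al). nra.
Qed.

Lemma qpoch_neq_0 (al : C) k : (Cmod al < 1)%R -> qpoch q al k <> RtoC 0.
Proof.
  intros H. induction k as [|k IH]; simpl; [apply RtoC_neq_0; lra|].
  apply Cmult_neq_0; auto. now apply qfactor_neq_0.
Qed.

Lemma ell_factor k : ell q d e (S k) =
  (RtoC 1 - Q * RtoC (q ^ k)) * (RtoC 1 - d * RtoC (q ^ k)) * (RtoC 1 - e * RtoC (q ^ k)).
Proof.
  unfold ell. cbv zeta. rewrite pown_S, pown_RtoC. fold Q.
  field. apply RtoC_neq_0. lra.
Qed.

Lemma rho_factor j k : rho q a b c j k =
  (RtoC 1 - RtoC (q ^ j)) * (RtoC 1 - a * RtoC (q ^ k)) * (RtoC 1 - b * RtoC (q ^ k))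
  * (RtoC 1 - c * RtoC (q ^ k)).
Proof. unfold rho. cbv zeta. rewrite !pown_RtoC. ring. Qed.

Lemma ell_neq_0 k : ell q d e (S k) <> RtoC 0.
Proof. rewrite ell_factor. repeat apply Cmult_neq_0; apply qfactor_neq_0; auto using CmodQ. Qed.

Lemma phi_coef_0 n : phi_coef q a b c d e n 0 = RtoC 1.
Proof.
  unfold phi_coef, qbinom. rewrite Nat.sub_0_r. simpl qpoch.
  pose proof (qpoch_neq_0 Q n CmodQ). field. auto.
Qed.

Lemma phi_coef_step n k : (k < n)%nat ->
  phi_coef q a b c d e n (S k) * ell q d e (S k)
  = phi_coef q a b c d e n k * rho q a b c (n - k) k.
Proof.
  intros Hk. rewrite ell_factor, rho_factor. unfold phi_coef, qbinom.
  replace (n - k)%nat with (S (n - S k)) by lia. cbn [qpoch].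
  replace (q ^ S (n - S k))%R with (q * q ^ (n - S k))%R by reflexivity.
  rewrite (RtoC_mult q). fold Q.
  pose proof (qpoch_neq_0 Q k CmodQ). pose proof (qpoch_neq_0 Q (n - S k) CmodQ).
  pose proof (qpoch_neq_0 d k hd). pose proof (qpoch_neq_0 e k he).
  pose proof (qfactor_neq_0 k CmodQ). pose proof (qfactor_neq_0 (n - S k) CmodQ).
  pose proof (qfactor_neq_0 k hd). pose proof (qfactor_neq_0 k he).
  field. repeat split; auto.
Qed.

(** Since the factors [ell (k+1)] do not vanish, the recurrence determines the
    coefficients of degree [n] from [A n 0], as [A n 0] times those of [phi_n]. *)
Lemma coef_rec_closed_form (A : nat -> nat -> C) n : coef_rec q a b c d e A n ->
  forall m, (m <= n)%nat -> A (n - m)%nat m = A n O * phi_coef q a b c d e n m.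
Proof.
  intros Hrec m. induction m as [|m IH]; intros Hm.
  - rewrite phi_coef_0, Nat.sub_0_r. ring.
  - apply (Cmult_reg_r (ell_neq_0 (k := m))).
    rewrite Hrec, IH by lia.
    rewrite <- !Cmult_assoc, phi_coef_step by lia. reflexivity.
Qed.

Lemma coef_rec_of_closed_form (A : nat -> nat -> C) (mu : C) n :
  (forall m, (m <= n)%nat -> A (n - m)%nat m = mu * phi_coef q a b c d e n m) ->
  coef_rec q a b c d e A n.
Proof.
  intros H k Hk. rewrite !H by lia. rewrite <- Cmult_assoc, phi_coef_step by auto. ring.
Qed.
End PhiRecurrence.

(** Multiplying by [q] shrinks, so the eight points of [qop] stay in a disc. *)
Lemma Cmod_mult_q_le (x : C) (q : R) : (0 < q < 1)%R -> (Cmod (x * RtoC q) <= Cmod x)%R.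
Proof.
  intros Hq. rewrite Cmod_mult, Cmod_R, Rabs_pos_eq by lra. pose proof (Cmod_ge_0 x). nra.
Qed.

Lemma Cmod_lt_Rmin3 (z : C) (r1 r2 r3 : R) : (Cmod z < Rmin (Rmin r1 r2) r3)%R ->
  (Cmod z < r1 /\ Cmod z < r2 /\ Cmod z < r3)%R.
Proof.
  intros H. pose proof (Rmin_l (Rmin r1 r2) r3). pose proof (Rmin_r (Rmin r1 r2) r3).
  pose proof (Rmin_l r1 r2). pose proof (Rmin_r r1 r2). lra.
Qed.

Lemma Rmin3_pos (r1 r2 r3 : R) :
  (0 < r1)%R -> (0 < r2)%R -> (0 < r3)%R -> (0 < Rmin (Rmin r1 r2) r3)%R.
Proof. intros. repeat apply Rmin_glb_lt; auto. Qed.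

Lemma qop_conv q a b c d e (S : nat -> C -> C -> C) (F : C -> C -> C) x y :
  (forall X Y, (X = x \/ X = x * RtoC q) ->
     (Y = y \/ Y = y * RtoC q \/ Y = y * RtoC q * RtoC q \/ Y = y * RtoC q * RtoC q * RtoC q) ->
     conv (fun N => S N X Y) (F X Y)) ->
  conv (fun N => qop q a b c d e (S N) x y) (qop q a b c d e F x y).
Proof.
  intros H. unfold qop, qop_lhs, qop_rhs.
  repeat match goal with
  | |- conv (fun N => @?u N - @?v N) (_ - _) => apply (@conv_minus u v)
  | |- conv (fun N => @?u N + @?v N) (_ + _) => apply (@conv_plus u v)
  | |- conv (fun N => ?k * @?u N) (_ * _) => apply (@conv_scal k u)
  | |- conv (fun N => S N ?X ?Y) _ => apply H; auto 6
  end.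
Qed.


Section Main.
Variables (q : R) (cf : coef7) (r : R) (f : C -> C -> C -> C -> C -> C -> C -> C).
Hypotheses (hq0 : (0 < q)%R) (hq1 : (q < 1)%R) (hf : analytic7_rep cf r f).

Lemma hparts_sum a b c d e x y :
  (Cmod a < r)%R -> (Cmod b < r)%R -> (Cmod c < r)%R -> (Cmod d < r)%R -> (Cmod e < r)%R ->
  (Cmod x < r)%R -> (Cmod y < r)%R ->
  is_series (fun n => hpart cf a b c d e n x y) (f a b c d e x y).
Proof.
  destruct hf as [Hr _]. destruct (analytic_bound hf) as [M HM].
  exact (@regrouping cf r M f Hr HM hf a b c d e x y).
Qed.

Lemma qop_series a b c d e x y :
  (Cmod a < r)%R -> (Cmod b < r)%R -> (Cmod c < r)%R -> (Cmod d < r)%R -> (Cmod e < r)%R ->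
  (Cmod x < r)%R -> (Cmod y < r)%R ->
  is_series (fun n => qop_hpoly q a b c d e (Acoef cf a b c d e) x y n)
            (qop q a b c d e (f a b c d e) x y).
Proof.
  intros Ha Hb Hc Hd He Hx Hy.
  assert (Hshrink : forall z, (Cmod z < r)%R -> (Cmod (z * RtoC q) < r)%R).
  { intros z Hz. eapply Rle_lt_trans; [apply Cmod_mult_q_le; lra | exact Hz]. }
  apply conv_ext with (N0 := O)
    (u := fun N => qop q a b c d e (fun X Y => sum_n (fun n => hpart cf a b c d e n X Y) N) x y).
  { intros N _. rewrite qop_sum. apply sum_n_ext. intros n. apply qop_hpoly_spec. }
  apply qop_conv. intros X Y HX HY. apply hparts_sum; auto.
  - destruct HX as [-> | ->]; auto.
  - destruct HY as [-> | [-> | [-> | ->]]]; auto.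
Qed.

Lemma Acoef_taylor a b c d e j k :
  (Cmod a < r)%R -> (Cmod b < r)%R -> (Cmod c < r)%R -> (Cmod d < r)%R -> (Cmod e < r)%R ->
  taylor_xy_is cf a b c d e j k (Acoef cf a b c d e j k).
Proof.
  intros. destruct hf as [Hr _]. destruct (analytic_bound hf) as [M HM].
  apply (@Acoef_spec cf r M Hr HM); lra.
Qed.

Lemma expandable_Acoef mu : expandable q cf mu ->
  exists rho0, (0 < rho0)%R /\ forall a b c d e : C,
    (Cmod a < rho0)%R -> (Cmod b < rho0)%R -> (Cmod c < rho0)%R ->
    (Cmod d < rho0)%R -> (Cmod e < rho0)%R ->
    forall n m, (m <= n)%nat ->
      Acoef cf a b c d e (n - m)%nat m = mu a b c d e n * phi_coef q a b c d e n m.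
Proof.
  intros [rho0 [Hrho Hexp]]. exists rho0. split; auto.
  intros a b c d e Ha Hb Hc Hd He n m Hmn.
  rewrite (Acoef_unique (Hexp a b c d e Ha Hb Hc Hd He (n - m)%nat m)).
  now replace (n - m + m)%nat with n by lia.
Qed.

(** If [qop F] vanishes near the origin, so does each of its homogeneous
    components: [sum_n t^(n+1) qop_hpoly _ u v n = qop F (t u) (t v) = 0] for
    [|t| < 1], and the identity theorem applies in [t]. *)
Lemma qop_hpoly_vanish a b c d e s :
  (0 < s <= r)%R -> (Cmod a < r)%R -> (Cmod b < r)%R -> (Cmod c < r)%R ->
  (Cmod d < r)%R -> (Cmod e < r)%R ->
  (forall x y, (Cmod x < s)%R -> (Cmod y < s)%R -> qop q a b c d e (f a b c d e) x y = RtoC 0) ->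
  forall u v, (Cmod u < s)%R -> (Cmod v < s)%R ->
  forall m, qop_hpoly q a b c d e (Acoef cf a b c d e) u v m = RtoC 0.
Proof.
  intros Hs Ha Hb Hc Hd He Hq u v Hu Hv m.
  set (coef := fun m => match m with
                        | O => RtoC 0
                        | S m' => qop_hpoly q a b c d e (Acoef cf a b c d e) u v m' end).
  change (qop_hpoly q a b c d e (Acoef cf a b c d e) u v m) with (coef (S m)).
  apply (@series_unique coef 1%R); [lra|]. intros t Ht.
  assert (Hscale : forall z, (Cmod z < s)%R -> (Cmod (t * z) < s)%R).
  { intros z Hz. rewrite Cmod_mult. pose proof (Cmod_ge_0 t). pose proof (Cmod_ge_0 z). nra. }
  pose proof (@qop_series a b c d e (t * u) (t * v) Ha Hb Hc Hd He) as Hser.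
  rewrite Hq in Hser by auto.
  apply is_series_decr_1.
  match goal with |- is_series _ ?l => replace l with (RtoC 0)
    by (change (RtoC 0 = RtoC 0 + - (RtoC 0 * pow_n t 0)); Cring) end.
  eapply is_series_ext; [|apply Hser; apply Rlt_le_trans with s; auto; lra].
  intros n. simpl coef. rewrite qop_hpoly_homog. apply Cmult_comm.
Qed.

Lemma coef_rec_of_qop_vanish a b c d e s :
  (0 < s <= r)%R -> (Cmod a < r)%R -> (Cmod b < r)%R -> (Cmod c < r)%R ->
  (Cmod d < r)%R -> (Cmod e < r)%R ->
  (forall x y, (Cmod x < s)%R -> (Cmod y < s)%R -> qop q a b c d e (f a b c d e) x y = RtoC 0) ->
  forall n, coef_rec q a b c d e (Acoef cf a b c d e) n.
Proof.
  intros Hs Ha Hb Hc Hd He Hq n. apply coef_rec_of_vanishing. intros w Hw.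
  set (t := (s / 2)%R).
  assert (Ht : (0 < t)%R) by (unfold t; lra).
  assert (H1 : (Cmod (RtoC t * RtoC 1) < s)%R).
  { rewrite Cmult_1_r, Cmod_R, Rabs_pos_eq; unfold t; lra. }
  assert (Hw' : (Cmod (RtoC t * w) < s)%R).
  { rewrite Cmod_mult, Cmod_R, Rabs_pos_eq by lra. pose proof (Cmod_ge_0 w). unfold t; nra. }
  pose proof (qop_hpoly_vanish Hs Ha Hb Hc Hd He Hq _ _ H1 Hw' n) as H0.
  rewrite qop_hpoly_homog in H0.
  apply (Cmult_reg_r (l := pow_n (RtoC t) (S n))).
  - rewrite pown_RtoC. apply RtoC_neq_0, pow_nonzero. lra.
  - rewrite Cmult_comm, H0. Cring.
Qed.

(** (i) implies (ii), with [mu_n = A(n,0)]. *)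
Lemma qeq_implies_expandable :
  (exists r' : R, (0 < r')%R /\
     forall a b c d e x y : C,
       (Cmod a < r')%R -> (Cmod b < r')%R -> (Cmod c < r')%R -> (Cmod d < r')%R ->
       (Cmod e < r')%R -> (Cmod x < r')%R -> (Cmod y < r')%R -> qeq q f a b c d e x y) ->
  exists mu, expandable q cf mu.
Proof.
  intros [r' [Hr' Hqeq]]. pose proof hf as [Hr _].
  exists (fun a b c d e n => Acoef cf a b c d e n O).
  set (s := Rmin (Rmin r' r) 1). exists s. split; [apply Rmin3_pos; lra|].
  intros a b c d e Ha Hb Hc Hd He j k.
  apply Cmod_lt_Rmin3 in Ha, Hb, Hc, Hd, He.
  assert (Hs : (0 < s <= r)%R).
  { split; [apply Rmin3_pos; lra|]. apply Rle_trans with (Rmin r' r); [apply Rmin_l | apply Rmin_r]. }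
  assert (Hrec : forall n, coef_rec q a b c d e (Acoef cf a b c d e) n).
  { apply (@coef_rec_of_qop_vanish a b c d e s Hs); try tauto.
    intros x y Hx Hy. apply qeq_iff_qop, Hqeq; try tauto.
    - apply Rlt_le_trans with s; auto. apply Rle_trans with (Rmin r' r); apply Rmin_l.
    - apply Rlt_le_trans with s; auto. apply Rle_trans with (Rmin r' r); apply Rmin_l. }
  pose proof (coef_rec_closed_form hq0 hq1 (proj2 (proj2 Hd)) (proj2 (proj2 He)) (Hrec (j + k)%nat)
                (m := k) ltac:(lia)) as Hjk.
  replace (j + k - k)%nat with j in Hjk by lia. rewrite <- Hjk.
  apply Acoef_taylor; tauto.
Qed.

(** (ii) implies (i): the closed form gives the recurrence in every degree, so
    every homogeneous component of [qop F] vanishes. *)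
Lemma expandable_implies_qeq mu : expandable q cf mu ->
  exists r' : R, (0 < r')%R /\
    forall a b c d e x y : C,
      (Cmod a < r')%R -> (Cmod b < r')%R -> (Cmod c < r')%R -> (Cmod d < r')%R ->
      (Cmod e < r')%R -> (Cmod x < r')%R -> (Cmod y < r')%R -> qeq q f a b c d e x y.
Proof.
  intros Hexp. pose proof hf as [Hr _].
  destruct (expandable_Acoef Hexp) as [rho0 [Hrho Hcoef]].
  set (s := Rmin (Rmin rho0 r) 1). exists s. split; [apply Rmin3_pos; lra|].
  intros a b c d e x y Ha Hb Hc Hd He Hx Hy.
  apply Cmod_lt_Rmin3 in Ha, Hb, Hc, Hd, He, Hx, Hy.
  apply qeq_iff_qop.
  assert (Hzero : forall n, qop_hpoly q a b c d e (Acoef cf a b c d e) x y n = RtoC 0).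
  { intros n. apply qop_hpoly_zero.
    apply (coef_rec_of_closed_form hq0 hq1 (proj2 (proj2 Hd)) (proj2 (proj2 He))
             (Acoef cf a b c d e) (mu := mu a b c d e n)).
    intros m Hm. apply Hcoef; tauto. }
  apply (conv_unique (u := sum_n (fun n => qop_hpoly q a b c d e (Acoef cf a b c d e) x y n))).
  - apply qop_series; tauto.
  - rewrite <- (Hzero O), <- (sum_O (fun n => qop_hpoly q a b c d e (Acoef cf a b c d e) x y n)).
    apply series_finite. intros m _. apply Hzero.
Qed.

(** The "moreover" part: under (ii), setting [y = 0] in the regrouped series
    leaves [sum_n mu_n x^n]. *)
Lemma expandable_x_series mu : expandable q cf mu ->
  exists rho : R, (0 < rho)%R /\
    forall a b c d e x : C,
      (Cmod a < rho)%R -> (Cmod b < rho)%R -> (Cmod c < rho)%R ->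
      (Cmod d < rho)%R -> (Cmod e < rho)%R -> (Cmod x < rho)%R ->
      is_series (fun n => mu a b c d e n * pow_n x n) (f a b c d e x (RtoC 0)).
Proof.
  intros Hexp. pose proof hf as [Hr _].
  destruct (expandable_Acoef Hexp) as [rho0 [Hrho Hcoef]].
  set (s := Rmin (Rmin rho0 r) 1). exists s. split; [apply Rmin3_pos; lra|].
  intros a b c d e x Ha Hb Hc Hd He Hx.
  apply Cmod_lt_Rmin3 in Ha, Hb, Hc, Hd, He, Hx.
  eapply is_series_ext; [|apply hparts_sum; try tauto; rewrite Cmod_0; lra].
  intros n. unfold hpart.
  assert (HA : Acoef cf a b c d e n O = mu a b c d e n).
  { pose proof (Hcoef a b c d e ltac:(tauto) ltac:(tauto) ltac:(tauto) ltac:(tauto) ltac:(tauto)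
                  n O ltac:(lia)) as Hn.
    rewrite Nat.sub_0_r in Hn. rewrite Hn, phi_coef_0; auto. Cring. }
  destruct n as [|n].
  - rewrite sum_O, Nat.sub_0_r, HA, !pown_0. Cring.
  - rewrite (@sum_n_shift C_AbelianMonoid), Nat.sub_0_r, HA.
    rewrite (sum_n_ext _ (fun _ => RtoC 0)), (@sum_n_zero C_AbelianMonoid).
    + rewrite pown_0. Cring.
    + intros k. rewrite pown_S. Cring.
Qed.
End Main.

Theorem theorem1 (q : R) (hq0 : (0 < q)%R) (hq1 : (q < 1)%R)
  (f : C -> C -> C -> C -> C -> C -> C -> C) (cf : coef7) (r : R)
  (hf : analytic7_rep cf r f) :
  ((exists r' : R, (0 < r')%R /\
      forall a b c d e x y : C,
        (Cmod a < r')%R -> (Cmod b < r')%R -> (Cmod c < r')%R ->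
        (Cmod d < r')%R -> (Cmod e < r')%R -> (Cmod x < r')%R ->
        (Cmod y < r')%R ->
        qeq q f a b c d e x y)
   <-> (exists mu : C -> C -> C -> C -> C -> nat -> C, expandable q cf mu))
  /\
  (forall mu : C -> C -> C -> C -> C -> nat -> C, expandable q cf mu ->
     exists rho : R, (0 < rho)%R /\
       forall a b c d e x : C,
         (Cmod a < rho)%R -> (Cmod b < rho)%R -> (Cmod c < rho)%R ->
         (Cmod d < rho)%R -> (Cmod e < rho)%R -> (Cmod x < rho)%R ->
         is_series (fun n => mu a b c d e n * pow_n x n) (f a b c d e x (RtoC 0))).
Proof.
  split; [split|].
  - exact (qeq_implies_expandable hq0 hq1 hf).
  - intros [mu Hmu]. exact (expandable_implies_qeq hq0 hq1 hf Hmu).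
  - intros mu Hmu. exact (expandable_x_series hq0 hq1 hf Hmu).
Qed.
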